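(* Let $\mathfrak g$ be a 4-dimensional real almost abelian Lie algebra admitting an LCS structure. Then $\mathfrak g$ is isomorphic to one of the following Lie algebras (basis $\{e_1,e_2,e_3,e_4\}$, only nonzero brackets listed): $\mathfrak h_3\times\mathbb R$: $[e_1,e_2]=e_3$; $\mathfrak n_4$: $[e_1,e_2]=e_3$, $[e_1,e_3]=e_4$; $\mathfrak r_{3,\lambda}\times\mathbb R$ ($\lambda\in\mathbb R$): $[e_1,e_2]=e_2$, $[e_1,e_3]=\lambda e_3$; $\mathfrak r_{4,\mu,\lambda}$ ($\mu\lambda\neq0$): $[e_1,e_2]=e_2$, $[e_1,e_3]=\mu e_3$, $[e_1,e_4]=\lambda e_4$; $\mathfrak r_3\times\mathbb R$: $[e_1,e_2]=e_2$, $[e_1,e_3]=e_2+e_3$; $\mathfrak r_{4,\lambda}$ ($\lambda\in\mathbb R$): $[e_1,e_2]=e_2$, $[e_1,e_3]=\lambda e_3$, $[e_1,e_4]=e_3+\lambda e_4$; $\mathfrak r_4$: $[e_1,e_2]=e_2$, $[e_1,e_3]=e_2+e_3$, $[e_1,e_4]=e_3+e_4$; $\mathfrak r'_{3,\lambda}\times\mathbb R$ ($\lambda\in\mathbb R$): $[e_1,e_2]=\lambda e_2-e_3$, $[e_1,e_3]=e_2+\lambda e_3$; $\mathfrak r'_{4,\mu,\lambda}$ ($\mu\neq0$, $\lambda\neq0$): $[e_1,e_2]=\mu e_2$, $[e_1,e_3]=\lambda e_3-e_4$, $[e_1,e_4]=e_3+\lambda e_4$.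
   Context: An almost abelian Lie algebra is a real Lie algebra with an abelian ideal of codimension one. An LCS structure on $\mathfrak g$ is a pair $(\omega,\theta)$ with $\omega\in\Lambda^2\mathfrak g^*$ non-degenerate and $\theta\in\mathfrak g^*$ closed and nonzero, such that $d\omega=\theta\wedge\omega$ ($d$ the Chevalley–Eilenberg differential). *)

From HB Require Import structures.
From mathcomp Require Import all_boot all_order all_algebra.
From mathcomp Require Import reals.
Set Implicit Arguments. Unset Strict Implicit. Unset Printing Implicit Defensive.
Import Order.TTheory GRing.Theory Num.Theory.
Local Open Scope ring_scope.

(* A 4-dimensional real Lie algebra is modelled (up to isomorphism) on R^4 = 'rV[R]_4
   with a bracket br; basis vectors e_1..e_4 are the rows of the identity (indices 0..3). *)
Section Defs.
Variable R : realType.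
Notation V := 'rV[R]_4.

Definition is_lie_bracket (br : V -> V -> V) : Prop :=
  [/\ (forall (a : R) x y z, br (a *: x + y) z = a *: br x z + br y z),
      (forall (a : R) x y z, br x (a *: y + z) = a *: br x y + br x z),
      (forall x, br x x = 0)
    & (forall x y z, br x (br y z) + br y (br z x) + br z (br x y) = 0)].

Definition almost_abelian (br : V -> V -> V) : Prop :=
  exists U : 'M[R]_4,
    [/\ \rank U = 3%N,
        (forall x y, (x <= U)%MS -> (br x y <= U)%MS)
      & (forall x y, (x <= U)%MS -> (y <= U)%MS -> br x y = 0)].

(* 1-forms theta in g^* are column vectors T: theta(x) = (x *m T) 0 0;
   2-forms omega in Lambda^2 g^* are skew matrices W: omega(x,y) = (x *m W *m y^T) 0 0. *)
Definition form1 (T : 'cV[R]_4) (x : V) : R := (x *m T) 0 0.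
Definition form2 (W : 'M[R]_4) (x y : V) : R := (x *m W *m y^T) 0 0.

(* Chevalley-Eilenberg differentials (trivial coefficients):
   d theta (x,y) = - theta([x,y]);
   d omega (x,y,z) = - omega([x,y],z) + omega([x,z],y) - omega([y,z],x). *)
Definition d1 (br : V -> V -> V) (T : 'cV[R]_4) (x y : V) : R :=
  - form1 T (br x y).
Definition d2 (br : V -> V -> V) (W : 'M[R]_4) (x y z : V) : R :=
  - form2 W (br x y) z + form2 W (br x z) y - form2 W (br y z) x.
Definition wedge12 (T : 'cV[R]_4) (W : 'M[R]_4) (x y z : V) : R :=
  form1 T x * form2 W y z - form1 T y * form2 W x z + form1 T z * form2 W x y.

Definition is_LCS (br : V -> V -> V) (W : 'M[R]_4) (T : 'cV[R]_4) : Prop :=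
  [/\ W^T = - W,
      W \in unitmx,
      T != 0,
      (forall x y, d1 br T x y = 0)
    & (forall x y z, d2 br W x y z = wedge12 T W x y z)].

Definition has_LCS (br : V -> V -> V) : Prop := exists W T, is_LCS br W T.

Definition lie_isomorphic (br1 br2 : V -> V -> V) : Prop :=
  exists A : 'M[R]_4, A \in unitmx /\
    forall x y, br1 x y *m A = br2 (x *m A) (y *m A).

(* Model algebras: only brackets [e1, e_j] (j = 2,3,4) are nonzero;
   f j k = coefficient of e_{k+1} in [e1, e_{j+1}] (j,k in 1..3, 0-based). *)
Definition mkad (f : nat -> nat -> R) : 'M[R]_4 :=
  \matrix_(i < 4, j < 4) if ((i == 0%N :> nat) || (j == 0%N :> nat)) then 0 else f i j.

(* [x,y] = x_1 ad(y) - y_1 ad(x), where the row i of M is [e1, e_{i+1}] *)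
Definition model_br (M : 'M[R]_4) (x y : V) : V :=
  x 0 0 *: (y *m M) - y 0 0 *: (x *m M).

Definition h3R : 'M[R]_4 := mkad (fun i j => match i, j with 1%N, 2%N => 1 | _, _ => 0 end).
Definition n4 : 'M[R]_4 :=
  mkad (fun i j => match i, j with 1%N, 2%N => 1 | 2%N, 3%N => 1 | _, _ => 0 end).
Definition r3R (l : R) : 'M[R]_4 :=
  mkad (fun i j => match i, j with 1%N, 1%N => 1 | 2%N, 2%N => l | _, _ => 0 end).
Definition r4ml (m l : R) : 'M[R]_4 :=
  mkad (fun i j => match i, j with 1%N, 1%N => 1 | 2%N, 2%N => m | 3%N, 3%N => l | _, _ => 0 end).
Definition r3R0 : 'M[R]_4 :=
  mkad (fun i j => match i, j with 1%N, 1%N => 1 | 2%N, 1%N => 1 | 2%N, 2%N => 1 | _, _ => 0 end).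
Definition r4l (l : R) : 'M[R]_4 :=
  mkad (fun i j => match i, j with
                   1%N, 1%N => 1 | 2%N, 2%N => l | 3%N, 2%N => 1 | 3%N, 3%N => l | _, _ => 0 end).
Definition r4 : 'M[R]_4 :=
  mkad (fun i j => match i, j with
                   1%N, 1%N => 1 | 2%N, 1%N => 1 | 2%N, 2%N => 1 | 3%N, 2%N => 1 | 3%N, 3%N => 1
                 | _, _ => 0 end).
Definition r3pR (l : R) : 'M[R]_4 :=
  mkad (fun i j => match i, j with
                   1%N, 1%N => l | 1%N, 2%N => -1 | 2%N, 1%N => 1 | 2%N, 2%N => l | _, _ => 0 end).
Definition r4pml (m l : R) : 'M[R]_4 :=
  mkad (fun i j => match i, j with
                   1%N, 1%N => m | 2%N, 2%N => l | 2%N, 3%N => -1 | 3%N, 2%N => 1 | 3%N, 3%N => l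
                 | _, _ => 0 end).

Definition in_list (br : V -> V -> V) : Prop :=
     lie_isomorphic br (model_br h3R)
  \/ lie_isomorphic br (model_br n4)
  \/ (exists l, lie_isomorphic br (model_br (r3R l)))
  \/ (exists m l, m * l != 0 /\ lie_isomorphic br (model_br (r4ml m l)))
  \/ lie_isomorphic br (model_br r3R0)
  \/ (exists l, lie_isomorphic br (model_br (r4l l)))
  \/ lie_isomorphic br (model_br r4)
  \/ (exists l, lie_isomorphic br (model_br (r3pR l)))
  \/ (exists m l, [/\ m != 0, l != 0 & lie_isomorphic br (model_br (r4pml m l))]).
End Defs.

(* A 4-dimensional almost abelian Lie algebra is a semidirect product [R e_1 ⋉_B R^3], where
   [B] is the action of [ad e_1] on the abelian ideal, and its isomorphism class only depends
   on [B] up to conjugation and nonzero scaling.  A real 3x3 matrix has a real eigenvalue, so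
   [B] may be taken block lower triangular, and its 2x2 block is either triangularizable or a
   rotation-scaling.  This leads to diagonal, Jordan and rotation normal forms, each of which
   gives an algebra of the list, except [B = 0] (the abelian [R^4]) and the rotation forms
   whose 2x2 block has purely imaginary eigenvalues ([r'_{4,mu,0}]).  Neither of these is LCS: on [R^4] the
   equation [d omega = theta /\ omega] forces [Pf(omega) theta = 0], and on [r'_{4,mu,0}],
   where closedness gives [theta = t e^1], it forces [Pf(omega) = 0]. *)

From HB Require Import structures.
From mathcomp Require Import all_boot all_order all_algebra.
From mathcomp Require Import reals.
From mathcomp Require Import fingroup perm.
From mathcomp.real_closed Require polyrcf.
From mathcomp.algebra_tactics Require Import ring lra.
Import Order.TTheory GRing.Theory Num.Theory.
Local Open Scope ring_scope.

Set Implicit Arguments. Unset Strict Implicit. Unset Printing Implicit Defensive.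

Section Matrix3.
Variable R : realType.

Definition mx3 (a b c d e f g h i : R) : 'M[R]_3 :=
  \matrix_(x < 3, y < 3) nth 0 (nth [::] [:: [:: a; b; c]; [:: d; e; f]; [:: g; h; i]] x) y.

Definition i0 : 'I_3 := ord0.
Definition i1 : 'I_3 := Ordinal (isT : 1 < 3)%N.
Definition i2 : 'I_3 := Ordinal (isT : 2 < 3)%N.

Lemma mx3E (A : 'M[R]_3) : A = mx3 (A i0 i0) (A i0 i1) (A i0 i2) (A i1 i0) (A i1 i1) (A i1 i2)
   (A i2 i0) (A i2 i1) (A i2 i2).
Proof.
apply/matrixP => i j; rewrite mxE.
by case: i => [[|[|[|//]]] Hi]; case: j => [[|[|[|//]]] Hj] /=; congr (A _ _); apply/val_inj.
Qed.

Lemma mul_mx3 a b c d e f g h i a' b' c' d' e' f' g' h' i' :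
  mx3 a b c d e f g h i *m mx3 a' b' c' d' e' f' g' h' i' =
  mx3 (a*a' + b*d' + c*g') (a*b' + b*e' + c*h') (a*c' + b*f' + c*i')
      (d*a' + e*d' + f*g') (d*b' + e*e' + f*h') (d*c' + e*f' + f*i')
      (g*a' + h*d' + i*g') (g*b' + h*e' + i*h') (g*c' + h*f' + i*i').
Proof.
apply/matrixP => x y; rewrite !mxE !big_ord_recr big_ord0 /= !mxE /=.
by case: x => [[|[|[|//]]] Hx]; case: y => [[|[|[|//]]] Hy] /=; ring.
Qed.

Lemma scale_mx3 k a b c d e f g h i :
  k *: mx3 a b c d e f g h i = mx3 (k*a) (k*b) (k*c) (k*d) (k*e) (k*f) (k*g) (k*h) (k*i).
Proof.
apply/matrixP => x y; rewrite !mxE.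
by case: x => [[|[|[|//]]] Hx]; case: y => [[|[|[|//]]] Hy].
Qed.

Lemma eq_mx3 a b c d e f g h i a' b' c' d' e' f' g' h' i' :
  a = a' -> b = b' -> c = c' -> d = d' -> e = e' -> f = f' -> g = g' -> h = h' -> i = i' ->
  mx3 a b c d e f g h i = mx3 a' b' c' d' e' f' g' h' i'.
Proof. by move=> -> -> -> -> -> -> -> -> ->. Qed.

Lemma mx3_1 : 1%:M = mx3 1 0 0 0 1 0 0 0 1.
Proof.
apply/matrixP => x y; rewrite !mxE.
by case: x => [[|[|[|//]]] Hx]; case: y => [[|[|[|//]]] Hy].
Qed.

Definition det3 a b c d e f g h i : R :=
  a * (e * i - f * h) - b * (d * i - f * g) + c * (d * h - e * g).

Lemma mx3_unit a b c d e f g h i : det3 a b c d e f g h i != 0 ->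
  mx3 a b c d e f g h i \in unitmx.
Proof.
move=> D0; set D := det3 a b c d e f g h i.
have: mx3 a b c d e f g h i *m
  mx3 ((e*i - f*h)/D) (-(b*i - c*h)/D) ((b*f - c*e)/D)
      (-(d*i - f*g)/D) ((a*i - c*g)/D) (-(a*f - c*d)/D)
      ((d*h - e*g)/D) (-(a*h - b*g)/D) ((a*e - b*d)/D) = 1%:M.
  by rewrite mul_mx3 mx3_1; apply: eq_mx3; rewrite /D /det3 in D0 *; field.
by case/mulmx1_unit.
Qed.

End Matrix3.

Section AlmostAbelianModel.
Variable R : realType.
Notation V := 'rV[R]_4.
Implicit Types (B : 'M[R]_3) (br : V -> V -> V).

Definition corner_mx (a : R) B : 'M[R]_4 := \matrix_(i, j)
  match unlift ord0 i, unlift ord0 j with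
  | Some i', Some j' => B i' j'
  | None, None => a
  | _, _ => 0
  end.

(* The almost abelian algebra [R e_1 ⋉_B R^3]: [ad e_1] acts on the ideal spanned by
   [e_2, e_3, e_4] as right multiplication of row vectors by [B]. *)
Definition aa_br B : V -> V -> V := model_br (corner_mx 0 B).

Lemma corner_mx_lift a B i j : corner_mx a B (lift ord0 i) (lift ord0 j) = B i j.
Proof. by rewrite mxE !liftK. Qed.
Lemma corner_mx_lift0 a B i : corner_mx a B (lift ord0 i) ord0 = 0.
Proof. by rewrite mxE liftK unlift_none. Qed.
Lemma corner_mx_0lift a B j : corner_mx a B ord0 (lift ord0 j) = 0.
Proof. by rewrite mxE liftK unlift_none. Qed.
Lemma corner_mx00 a B : corner_mx a B ord0 ord0 = a.
Proof. by rewrite mxE unlift_none. Qed.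

Definition corner_mxE :=
  (corner_mx_lift, corner_mx_lift0, corner_mx_0lift, corner_mx00).

Lemma mulmx_split0 m n (A : 'M[R]_(m, 4)) (C : 'M[R]_(4, n)) i j :
  (A *m C) i j = A i ord0 * C ord0 j + \sum_k A i (lift ord0 k) * C (lift ord0 k) j.
Proof. by rewrite mxE big_ord_recl. Qed.

Lemma mul_corner_mx a b B C : corner_mx a B *m corner_mx b C = corner_mx (a * b) (B *m C).
Proof.
apply/matrixP => i j; rewrite mulmx_split0.
case: (unliftP ord0 i) => [i'|] ->; case: (unliftP ord0 j) => [j'|] ->;
  rewrite !corner_mxE ?mul0r ?mulr0 ?add0r.
- by rewrite mxE; apply: eq_bigr => k _; rewrite !corner_mxE.
- by rewrite big1 // => k _; rewrite !corner_mxE mulr0.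
- by rewrite big1 // => k _; rewrite !corner_mxE mul0r.
- by rewrite big1 ?addr0 // => k _; rewrite !corner_mxE mul0r.
Qed.

Lemma corner_mx1 : corner_mx 1 1%:M = 1%:M.
Proof.
apply/matrixP => i j; rewrite [RHS]mxE.
case: (unliftP ord0 i) => [i'|] ->; case: (unliftP ord0 j) => [j'|] ->;
  rewrite !corner_mxE //.
by rewrite mxE (inj_eq lift_inj).
Qed.

Lemma scale_corner_mx k a B : k *: corner_mx a B = corner_mx (k * a) (k *: B).
Proof.
apply/matrixP => i j; rewrite [LHS]mxE.
by case: (unliftP ord0 i) => [i'|] ->; case: (unliftP ord0 j) => [j'|] ->;
  rewrite !corner_mxE ?mxE ?mulr0.
Qed.

Lemma mul_corner_mx00 (x : V) a B : (x *m corner_mx a B) 0 0 = x 0 0 * a.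
Proof.
rewrite mulmx_split0 corner_mxE big1 ?addr0 // => k _.
by rewrite corner_mxE mulr0.
Qed.

Definition scaled_similar B B' :=
  exists P c, [/\ P \in unitmx, c != 0 & P *m B = c *: (B' *m P)].

Lemma scaled_similar_refl B : scaled_similar B B.
Proof. by exists 1%:M, 1; rewrite unitmx1 oner_eq0 mul1mx mulmx1 scale1r. Qed.

(* If [P B = c B' P], the isomorphism is [diag(c, P^-1)]: rescaling [e_1] by [c]
   absorbs the scalar. *)
Lemma aa_br_iso B B' : scaled_similar B B' -> lie_isomorphic (aa_br B) (aa_br B').
Proof.
move=> [P [c [Pu c0 PB]]]; set Q := invmx P.
have BQ : B *m Q = c *: (Q *m B').
  transitivity (Q *m (P *m B) *m Q); first by rewrite mulKmx.
  by rewrite PB -scalemxAr -scalemxAl -!mulmxA mulmxV // mulmx1.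
exists (corner_mx c Q); split.
  have /mulmx1_unit [] // : corner_mx c Q *m corner_mx c^-1 P = 1%:M.
  by rewrite mul_corner_mx mulfV // mulVmx // corner_mx1.
have BK : corner_mx 0 B *m corner_mx c Q = c *: (corner_mx c Q *m corner_mx 0 B').
  by rewrite !mul_corner_mx scale_corner_mx BQ mul0r !mulr0.
move=> x y; rewrite /aa_br /model_br mulmxBl -!scalemxAl -!mulmxA BK.
rewrite !mul_corner_mx00 -!scalemxAr !scalerA !mulmxA; congr (_ *: _ - _ *: _); ring.
Qed.

Lemma lie_isomorphic_trans br1 br2 br3 :
  lie_isomorphic br1 br2 -> lie_isomorphic br2 br3 -> lie_isomorphic br1 br3.
Proof.
move=> [A [Au HA]] [C [Cu HC]]; exists (A *m C); split; first by rewrite unitmx_mul Au.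
by move=> x y; rewrite mulmxA HA HC !mulmxA.
Qed.

Lemma in_list_iso br1 br2 : lie_isomorphic br1 br2 -> in_list br2 -> in_list br1.
Proof.
move=> I12; have T := lie_isomorphic_trans I12.
case=> [H|[H|[[l H]|[[m [l [? H]]]|[H|[[l H]|[H|[[l H]|[m [l [? ? H]]]]]]]]]]].
- by left; apply: T.
- by right; left; apply: T.
- by right; right; left; exists l; apply: T.
- by right; right; right; left; exists m, l; split=> //; apply: T.
- by do 4 right; left; apply: T.
- by do 5 right; left; exists l; apply: T.
- by do 6 right; left; apply: T.
- by do 7 right; left; exists l; apply: T.
- by do 8 right; exists m, l; split=> //; apply: T.
Qed.

(* Transport [(omega, theta)] along [x |-> x A]: [W' = A^-1 W A^-T], [T' = A^-1 T]. *)
Lemma has_LCS_iso br1 br2 : lie_isomorphic br1 br2 -> has_LCS br1 -> has_LCS br2.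
Proof.
move=> [A [Au HA]] [W [T [WT Wu T0 d1T d2W]]]; set Ai := invmx A.
have AAi : A *m Ai = 1%:M by rewrite mulmxV.
have f1 u : form1 (Ai *m T) (u *m A) = form1 T u.
  by rewrite /form1 mulmxA -(mulmxA u) AAi mulmx1.
have f2 u v : form2 (Ai *m W *m Ai^T) (u *m A) (v *m A) = form2 W u v.
  rewrite /form2 trmx_mul !mulmxA -(mulmxA u A Ai) AAi mulmx1.
  by rewrite -(mulmxA _ Ai^T A^T) -trmx_mul AAi trmx1 mulmx1.
have xE (x : V) : x = (x *m Ai) *m A by rewrite mulmxKV.
exists (Ai *m W *m Ai^T), (Ai *m T); split.
- by rewrite !trmx_mul trmxK WT mulNmx mulmxN mulmxA.
- by rewrite !unitmx_mul unitmx_tr !unitmx_inv Au Wu.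
- apply: contra T0 => /eqP AiT0; apply/eqP.
  by rewrite -[T]mul1mx -AAi -mulmxA AiT0 mulmx0.
- by move=> x y; rewrite (xE x) (xE y) /d1 -HA f1; exact: d1T.
- by move=> x y z; rewrite (xE x) (xE y) (xE z) /d2 /wedge12 -!HA !f1 !f2; exact: d2W.
Qed.

Definition listed_or_not_LCS B := in_list (aa_br B) \/ ~ has_LCS (aa_br B).

Lemma listed_or_not_LCS_sim B B' :
  scaled_similar B B' -> listed_or_not_LCS B' -> listed_or_not_LCS B.
Proof.
move=> /aa_br_iso I [L|N]; first by left; exact: in_list_iso L.
by right => /(has_LCS_iso I).
Qed.

End AlmostAbelianModel.

Section Reduction.
Variable R : realType.
Notation V := 'rV[R]_4.
Implicit Types (br : V -> V -> V) (U Q : 'M[R]_4).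

Definition e (i : 'I_4) : V := delta_mx 0 i.

Definition is_bilinear (f : V -> V -> V) :=
  (forall (a : R) x y z, f (a *: x + y) z = a *: f x z + f y z) /\
  (forall (a : R) x y z, f x (a *: y + z) = a *: f x y + f x z).

Lemma bilinear_eq_on_basis f g : is_bilinear f -> is_bilinear g ->
  (forall i j, f (e i) (e j) = g (e i) (e j)) -> forall x y, f x y = g x y.
Proof.
have sum_l h : is_bilinear h -> forall (a : 'I_4 -> R) (v : 'I_4 -> V) z,
    h (\sum_i a i *: v i) z = \sum_i a i *: h (v i) z.
  move=> [hl _] a v z; have h0 : h 0 z = 0.
    have := hl 1 0 0 z; rewrite !scale1r addr0.
    by move/(congr1 (fun w => w - h 0 z)); rewrite subrr addrK.
  by apply: (big_rec2 (fun s t => h s z = t)) => // i s t _ <-; exact: hl.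
have sum_r h : is_bilinear h -> forall (a : 'I_4 -> R) (v : 'I_4 -> V) z,
    h z (\sum_i a i *: v i) = \sum_i a i *: h z (v i).
  move=> [_ hr] a v z; have h0 : h z 0 = 0.
    have := hr 1 z 0 0; rewrite !scale1r addr0.
    by move/(congr1 (fun w => w - h z 0)); rewrite subrr addrK.
  by apply: (big_rec2 (fun s t => h z s = t)) => // i s t _ <-; exact: hr.
move=> bf bg fg x y; rewrite (row_sum_delta x) (row_sum_delta y) !sum_l //.
apply: eq_bigr => i _; rewrite !sum_r //.
by congr (_ *: _); apply: eq_bigr => j _; rewrite fg.
Qed.

Lemma model_br_bilinear M : is_bilinear (model_br M).
Proof.
split=> a x y z; rewrite /model_br mulmxDl -scalemxAl; apply/rowP => k; rewrite !mxE; ring.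
Qed.

(* The first three rows of [row_ebase U] span [U]; the transposition moves them last. *)
Lemma codim1_adapted_basis U : \rank U = 3 -> exists Q,
  [/\ Q \in unitmx, forall k : 'I_3, (row (lift ord0 k) Q <= U)%MS
    & forall u : V, (u <= U)%MS -> (u *m invmx Q) 0 0 = 0].
Proof.
move=> rU; pose E := row_ebase U; pose C := col_ebase U.
pose s := (tperm ord0 ord_max : 'S_4); pose Q := row_perm s E.
have Qu : Q \in unitmx by rewrite /Q row_permE unitmx_mul unitmx_perm row_ebase_unit.
have hE : C *m pid_mx 3 *m E = U by have := mulmx_ebase U; rewrite rU.
have rowE3 (k : 'I_4) : (k < 3)%N -> (row k E <= U)%MS.
  move=> Hk; have -> : row k E = row k (invmx C *m U).
    rewrite -hE -!mulmxA mulKmx ?col_ebase_unit // row_mul [LHS]rowE; congr (_ *m _).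
    apply/rowP => j; rewrite !mxE Hk andbT.
    by case: k Hk => [[|[|[|//]]] ?] _; case: j => [[|[|[|[|//]]]] ?].
  exact: submx_trans (row_sub _ _) (submxMl _ _).
exists Q; split=> // [k|u].
  have -> : row (lift ord0 k) Q = row (s (lift ord0 k)) E by apply/rowP => j; rewrite !mxE.
  apply: rowE3; rewrite /s; case: tpermP => [/eqP|//|].
    by rewrite eq_sym (negbTE (neq_lift _ _)).
  move=> _; case: k => [[|[|[|//]]] ?] //= H.
  by exfalso; apply: H; apply: val_inj.
move/submxP=> [w ->]; rewrite -hE.
have -> : E = perm_mx s^-1 *m Q.
  by rewrite /Q row_permE mulmxA -perm_mxM mulVg perm_mx1 mul1mx.
rewrite !mulmxA mulmxK // -col_permE mxE.
have -> : s 0 = ord_max by rewrite /s -[0]/(ord0 : 'I_4) tpermL.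
rewrite mxE big1 // => k _; rewrite [pid_mx _ _ _]mxE.
by case: k => [[|[|[|[|//]]]] ?] /=; rewrite ?mulr0.
Qed.

Lemma lie_bracket_anti br : is_lie_bracket br -> forall x y, br y x = - br x y.
Proof.
case=> L1 L2 Lxx _ x y.
have brDl u v w : br (u + v) w = br u w + br v w by have := L1 1 u v w; rewrite !scale1r.
have brDr u v w : br w (u + v) = br w u + br w v by have := L2 1 w u v; rewrite !scale1r.
apply/eqP; rewrite -addr_eq0.
by have := Lxx (x + y); rewrite brDl !brDr !Lxx add0r addr0 addrC => ->.
Qed.

Lemma model_br_anti (M : 'M[R]_4) (x y : V) : model_br M y x = - model_br M x y.
Proof. by rewrite /model_br opprB. Qed.

Lemma lie_isomorphic_change_basis br Q : Q \in unitmx ->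
  lie_isomorphic br (fun x y => br (x *m Q) (y *m Q) *m invmx Q).
Proof.
by move=> Qu; exists (invmx Q); split=> [|x y]; rewrite ?unitmx_inv // !mulmxKV.
Qed.

Lemma aa_br_e0 B j : aa_br B (e ord0) (e j) = row j (corner_mx 0 B).
Proof.
rewrite /aa_br /model_br /e !mxE eqxx scale1r -!rowE.
have [->|j0] := eqVneq j ord0; last by rewrite scale0r subr0.
rewrite scale1r subrr; apply/rowP => k; rewrite !mxE.
by rewrite unlift_none; case: unlift.
Qed.

Lemma aa_br_ideal B i j : ord0 != i -> ord0 != j -> aa_br B (e i) (e j) = 0.
Proof.
move=> /negbTE i0 /negbTE j0.
by rewrite /aa_br /model_br /e !mxE i0 j0 !andbF !scale0r subrr.
Qed.

Lemma almost_abelian_aa_br br : is_lie_bracket br -> almost_abelian br ->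
  exists B, lie_isomorphic br (aa_br B).
Proof.
move=> Lbr [U [rU Uid Uab]]; have br_anti := lie_bracket_anti Lbr.
case: Lbr => L1 L2 Lxx _; have [Q [Qu QU UQ]] := codim1_adapted_basis rU.
pose br' x y := br (x *m Q) (y *m Q) *m invmx Q.
have br'_bil : is_bilinear br'.
  by split=> a x y z; rewrite /br' mulmxDl -scalemxAl ?L1 ?L2 mulmxDl -scalemxAl.
have eQ i : e i *m Q = row i Q by rewrite rowE.
pose B : 'M[R]_3 := \matrix_(j, k) br' (e ord0) (e (lift ord0 j)) 0 (lift ord0 k).
have brB j : br' (e ord0) (e (lift ord0 j)) = aa_br B (e ord0) (e (lift ord0 j)).
  rewrite aa_br_e0; apply/rowP => k; rewrite [in RHS]mxE.
  case: (unliftP ord0 k) => [k'|] ->; first by rewrite corner_mxE [RHS]mxE.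
  rewrite corner_mxE /br' !eQ UQ // br_anti eqmx_opp; exact/Uid/QU.
exists B; apply: (lie_isomorphic_trans (lie_isomorphic_change_basis br Qu)).
exists 1%:M; split=> [|x y]; first exact: unitmx1.
rewrite !mulmx1; apply: (bilinear_eq_on_basis br'_bil (model_br_bilinear (corner_mx 0 B))).
rewrite -/(aa_br B) => i j.
case: (unliftP ord0 i) => [i'|] ->; case: (unliftP ord0 j) => [j'|] ->.
- by rewrite aa_br_ideal ?neq_lift // /br' !eQ Uab ?QU ?mul0mx.
- by rewrite /br' br_anti mulNmx -/(br' _ _) brB /aa_br [RHS]model_br_anti.
- exact: brB.
- by rewrite /br' Lxx mul0mx /aa_br /model_br subrr.
Qed.

End Reduction.

Arguments e {R} i.

Section Pfaffian.
Variable R : realType.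

Definition o0 : 'I_4 := ord0.
Definition o1 : 'I_4 := Ordinal (isT : 1 < 4)%N.
Definition o2 : 'I_4 := Ordinal (isT : 2 < 4)%N.
Definition o3 : 'I_4 := Ordinal (isT : 3 < 4)%N.

Definition mx4 (rows : seq (seq R)) : 'M[R]_4 := \matrix_(i, j) nth 0 (nth [::] rows i) j.

Definition skew4 (a b c d f g : R) : 'M[R]_4 :=
  mx4 [:: [:: 0; a; b; c]; [:: -a; 0; d; f]; [:: -b; -d; 0; g]; [:: -c; -f; -g; 0]].

Definition pfaffian4 (a b c d f g : R) := a * g - b * f + c * d.

Definition skew4_dual (a b c d f g : R) := skew4 (- g) f (- d) (- c) b (- a).

Lemma skew_mx_skew4 (W : 'M[R]_4) : W^T = - W -> exists a b c d f g, W = skew4 a b c d f g.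
Proof.
move=> WT; have sk i j : W j i = - W i j.
  by have := congr1 (fun X : 'M[R]_4 => X i j) WT; rewrite !mxE.
have sk0 i : W i i = 0.
  by apply/eqP; rewrite -[_ == 0](mulrn_eq0 _ 2) mulr2n -[X in _ + X]opprK -sk subrr.
exists (W o0 o1), (W o0 o2), (W o0 o3), (W o1 o2), (W o1 o3), (W o2 o3).
apply/matrixP => i j; rewrite mxE.
case: i => [[|[|[|[|//]]]] Hi]; case: j => [[|[|[|[|//]]]] Hj] /=;
  first [ by rewrite -(sk0 (Ordinal Hi)); congr (W _ _); apply: val_inj
        | by congr (W _ _); apply: val_inj
        | by rewrite -sk; congr (W _ _); apply: val_inj ].
Qed.

Lemma mul_skew4_dual a b c d f g :
  skew4 a b c d f g *m skew4_dual a b c d f g = pfaffian4 a b c d f g *: 1%:M.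
Proof.
apply/matrixP => i j; rewrite !mxE !big_ord_recr big_ord0 /= !mxE /=.
by case: i => [[|[|[|[|//]]]] Hi]; case: j => [[|[|[|[|//]]]] Hj] /=; rewrite /pfaffian4; ring.
Qed.

Lemma skew4_unit_pfaffian a b c d f g :
  skew4 a b c d f g \in unitmx -> pfaffian4 a b c d f g != 0.
Proof.
move=> Wu; apply/eqP => Pf0.
have D0 : skew4_dual a b c d f g = 0.
  by rewrite -[skew4_dual _ _ _ _ _ _](mulKmx Wu) mul_skew4_dual Pf0 scale0r mulmx0.
have entry0 i j : skew4_dual a b c d f g i j = 0 by rewrite D0 mxE.
have := entry0 o0 o1; have := entry0 o0 o2; have := entry0 o0 o3;
have := entry0 o1 o2; have := entry0 o1 o3; have := entry0 o2 o3.
rewrite !mxE /= => Ea Eb Ec Ed Ef Eg.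
have W0 : skew4 a b c d f g = 0.
  apply/matrixP => i j; rewrite !mxE.
  by case: i => [[|[|[|[|//]]]] Hi]; case: j => [[|[|[|[|//]]]] Hj] /=; lra.
by move: Wu; rewrite W0 unitmxE det0 unitr0.
Qed.

End Pfaffian.

(* Row [i] of [B] holds the coordinates of [ [e_1, e_(i+2)] ], so these are the
   transposes of the usual (column) normal forms. *)
Section NormalForms.
Variable R : realType.

Definition diag3 (x y z : R) := mx3 x 0 0 0 y 0 0 0 z.
Definition jordan2 (x y k : R) := mx3 x 0 0 0 y 0 0 k y.
Definition jordan3 (x : R) := mx3 x 0 0 1 x 0 0 1 x.
Definition rot3 (r p q : R) := mx3 r 0 0 0 p (- q) 0 q p.
Definition lower3 (r s t a b d : R) := mx3 r 0 0 a s 0 b d t.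

End NormalForms.

Ltac scaled_similar_by P c :=
  exists P, c; split;
  [ apply: mx3_unit; rewrite /det3 ?(mulr0, mul0r, mulr1, mul1r, subr0, sub0r, addr0, add0r)
  |
  | rewrite /diag3 /jordan2 /jordan3 /rot3 /lower3 !mul_mx3 scale_mx3 /=; apply: eq_mx3 ];
  try ring; try (field; by repeat (apply/andP; split)); try (apply/eqP; lra);
  try by rewrite ?oppr_eq0 ?mulf_neq0 ?invr_eq0 ?expf_neq0.

Section NonLCS.
Variable R : realType.
Notation V := 'rV[R]_4.
Implicit Types (B : 'M[R]_3) (M W : 'M[R]_4) (T : 'cV[R]_4).

Lemma mulmx4E m n (A : 'M[R]_(m, 4)) (C : 'M[R]_(4, n)) i j :
  (A *m C) i j = A i o0 * C o0 j + A i o1 * C o1 j + A i o2 * C o2 j + A i o3 * C o3 j.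
Proof.
rewrite mxE !big_ord_recr big_ord0 /= add0r.
by congr (_ + _ + _ + _); congr (A i _ * C _ j); apply: val_inj.
Qed.

Lemma corner_mx0_mx3 a b c d f g h i k : corner_mx 0 (mx3 a b c d f g h i k) =
  @mx4 R [:: [:: 0; 0; 0; 0]; [:: 0; a; b; c]; [:: 0; d; f; g]; [:: 0; h; i; k]].
Proof.
apply/matrixP => x y; rewrite [RHS]mxE.
case: (unliftP ord0 x) => [x'|] ->; case: (unliftP ord0 y) => [y'|] ->;
  rewrite !corner_mxE //.
- by rewrite mxE; case: x' => [[|[|[|//]]] ?]; case: y' => [[|[|[|//]]] ?].
- by case: x' => [[|[|[|//]]] ?].
- by case: y' => [[|[|[|//]]] ?].
Qed.

Lemma aa_br0 (x y : V) : aa_br 0 x y = 0.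
Proof.
rewrite /aa_br; have -> : corner_mx 0 (0 : 'M[R]_3) = 0.
  apply/matrixP => i j; rewrite [RHS]mxE.
  by case: (unliftP ord0 i) => [i'|] ->; case: (unliftP ord0 j) => [j'|] ->;
    rewrite !corner_mxE ?mxE.
by rewrite /model_br !mulmx0 !scaler0 subrr.
Qed.

Lemma form1_e T i : form1 T (e i) = T i 0.
Proof. by rewrite /form1 /e -rowE mxE. Qed.

Lemma form2_e W (x : V) j : form2 W x (e j) = (x *m W) 0 j.
Proof. by rewrite /form2 /e trmx_delta -colE mxE. Qed.

Lemma form2_ee W i j : form2 W (e i) (e j) = W i j.
Proof. by rewrite form2_e /e -rowE mxE. Qed.

Lemma form1_row T M j : form1 T (row j M) = (M *m T) j 0.
Proof. by rewrite /form1 -row_mul mxE. Qed.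

Lemma form2_row W M j k : form2 W (row j M) (e k) = (M *m W) j k.
Proof. by rewrite form2_e -row_mul mxE. Qed.

Lemma form2_0 W (y : V) : form2 W 0 y = 0.
Proof. by rewrite /form2 !mul0mx mxE. Qed.

Lemma is_LCS_pfaffian br W T : is_LCS br W T ->
  exists a b c d f g, W = skew4 a b c d f g /\ pfaffian4 a b c d f g != 0.
Proof.
case=> WT Wu _ _ _; have [a [b [c [d [f [g WE]]]]]] := skew_mx_skew4 WT.
by exists a, b, c, d, f, g; split=> //; apply: skew4_unit_pfaffian; rewrite -WE.
Qed.

(* On the abelian algebra [d omega = 0], so [theta /\ omega = 0]; its four components
   are, up to sign, the entries of [skew4_dual * T], and [mul_skew4_dual] then gives
   [Pf(omega) theta = 0]. *)
Lemma no_LCS_abelian : ~ has_LCS (aa_br (0 : 'M[R]_3)).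
Proof.
move=> [W [T LCS]]; have [a [b [c [d [f [g [WE Pf]]]]]]] := is_LCS_pfaffian LCS.
case: LCS => _ _ T0 _ d2W; subst W.
have wedge0 i j k : wedge12 T (skew4 a b c d f g) (e i) (e j) (e k) = 0.
  by rewrite -d2W /d2 !aa_br0 !form2_0 oppr0 !addr0.
have DT : skew4_dual a b c d f g *m T = 0.
  have := wedge0 o1 o2 o3; have := wedge0 o0 o2 o3.
  have := wedge0 o0 o1 o3; have := wedge0 o0 o1 o2.
  rewrite /wedge12 !form1_e !form2_ee !mxE /= => E3 E2 E1 E0.
  apply/colP => i; rewrite mulmx4E !mxE.
  by case: i => [[|[|[|[|//]]]] Hi] /=; lra.
have : pfaffian4 a b c d f g *: T = 0.
  by rewrite -[T]mul1mx scalemxAl -mul_skew4_dual -mulmxA DT mulmx0.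
by move/eqP; rewrite scaler_eq0 (negbTE Pf) (negbTE T0).
Qed.

(* [d theta = 0] forces [theta = t e^1]; then [d omega = theta /\ omega] kills the
   coefficients [g], [d], [f] of [omega], hence its Pfaffian. *)
Lemma no_LCS_rot3 (m : R) : m != 0 -> ~ has_LCS (aa_br (rot3 m 0 1)).
Proof.
move=> m0 [W [T LCS]]; have [a [b [c [d [f [g [WE Pf]]]]]]] := is_LCS_pfaffian LCS.
case: LCS => _ _ T0 d1T d2W; subst W.
have F1 := d1T (e o0) (e o1); have F2 := d1T (e o0) (e o2); have F3 := d1T (e o0) (e o3).
have E1 := d2W (e o0) (e o1) (e o2); have E2 := d2W (e o0) (e o1) (e o3).
have E3 := d2W (e o0) (e o2) (e o3).
rewrite /d1 !aa_br_e0 !form1_row /rot3 corner_mx0_mx3 !mulmx4E !mxE /= in F1 F2 F3.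
rewrite /d2 /wedge12 !aa_br_e0 !aa_br_ideal // !form2_row !form2_0 !form1_e !form2_ee
  /rot3 corner_mx0_mx3 !mulmx4E !mxE /= in E1 E2 E3.
move: E1 E2 E3 Pf F1 F2 F3.
set t0 := T o0 0; set t1 := T o1 0; set t2 := T o2 0; set t3 := T o3 0.
move=> E1 E2 E3 Pf F1 F2 F3.
have t1_0 : t1 = 0.
  have /eqP : m * t1 = 0 by lra.
  by rewrite mulf_eq0 (negbTE m0) => /eqP.
have t2_0 : t2 = 0 by lra.
have t3_0 : t3 = 0 by lra.
rewrite t1_0 t2_0 t3_0 in E1 E2 E3.
have t0_neq0 : t0 != 0.
  apply: contraNneq T0 => t0_0; apply/eqP/colP => i; rewrite !mxE.
  case: i => [[|[|[|[|//]]]] Hi];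
    [rewrite -t0_0 | rewrite -t1_0 | rewrite -t2_0 | rewrite -t3_0];
    by congr (T _ _); apply: val_inj.
have g0 : g = 0.
  have /eqP : t0 * g = 0 by lra.
  by rewrite mulf_eq0 (negbTE t0_neq0) => /eqP.
have f_d : f = (t0 + m) * d by lra.
have d_f : - d = (t0 + m) * f by lra.
have d0 : d = 0.
  have pos : 0 < (t0 + m) ^+ 2 + 1 by apply: ltr_wpDl (sqr_ge0 _) ltr01.
  have /eqP : d * ((t0 + m) ^+ 2 + 1) = 0 by rewrite f_d in d_f; lra.
  by rewrite mulf_eq0 (gt_eqF pos) orbF => /eqP.
by move: Pf; rewrite /pfaffian4 d0 g0 f_d d0 !mulr0 subrr addr0 eqxx.
Qed.

End NonLCS.

Section NormalFormsListed.
Variable R : realType.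
Local Notation mx3 := (@mx3 R).

Lemma mkad_corner (f : nat -> nat -> R) : mkad f =
  corner_mx 0 (mx3 (f 1 1) (f 1 2) (f 1 3) (f 2 1) (f 2 2) (f 2 3) (f 3 1) (f 3 2) (f 3 3))%N.
Proof.
apply/matrixP => i j; rewrite !mxE.
case: (unliftP ord0 i) => [i'|] ->; case: (unliftP ord0 j) => [j'|] ->; rewrite ?orbT //.
by rewrite mxE; case: i' => [[|[|[|//]]] ?]; case: j' => [[|[|[|//]]] ?].
Qed.

Lemma aa_br_iso_mkad (B : 'M[R]_3) (f : nat -> nat -> R) :
  scaled_similar B
    (mx3 (f 1 1) (f 1 2) (f 1 3) (f 2 1) (f 2 2) (f 2 3) (f 3 1) (f 3 2) (f 3 3))%N ->
  lie_isomorphic (aa_br B) (model_br (mkad f)).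
Proof. by rewrite mkad_corner; exact: aa_br_iso. Qed.

Lemma listed_diag3_1 (a b : R) : listed_or_not_LCS (diag3 1 a b).
Proof.
left; have [b0|b0] := eqVneq b 0.
  right; right; left; exists a; apply: aa_br_iso_mkad; rewrite b0.
  exact: scaled_similar_refl.
have [a0|a0] := eqVneq a 0.
  right; right; left; exists b; apply: aa_br_iso_mkad; rewrite a0.
  by scaled_similar_by (mx3 1 0 0 0 0 1 0 1 0) (1 : R).
right; right; right; left; exists a, b; split; first by rewrite mulf_neq0.
exact/aa_br_iso_mkad/scaled_similar_refl.
Qed.

Lemma listed_diag3 (x y z : R) : listed_or_not_LCS (diag3 x y z).
Proof.
have scale (u v w : R) : u != 0 -> listed_or_not_LCS (diag3 u v w).
  move=> u0; apply: (@listed_or_not_LCS_sim _ _ (diag3 1 (v / u) (w / u))); last first.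
    exact: listed_diag3_1.
  by scaled_similar_by (mx3 1 0 0 0 1 0 0 0 1) u.
have [->|] := eqVneq x 0; last exact: scale.
have [->|y0] := eqVneq y 0; last first.
  apply: (@listed_or_not_LCS_sim _ _ (diag3 y 0 z)); last exact: scale.
  by scaled_similar_by (mx3 0 1 0 1 0 0 0 0 1) (1 : R).
have [->|z0] := eqVneq z 0; last first.
  apply: (@listed_or_not_LCS_sim _ _ (diag3 z 0 0)); last exact: scale.
  by scaled_similar_by (mx3 0 0 1 0 1 0 1 0 0) (1 : R).
have -> : diag3 0 0 0 = 0 :> 'M[R]_3.
  by apply/matrixP => i j; rewrite !mxE; case: i j => [[|[|[|//]]] ?] [[|[|[|//]]] ?].
by right; exact: no_LCS_abelian.
Qed.

Lemma scaled_similar_jordan2_1 (x y k : R) : k != 0 ->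
  scaled_similar (jordan2 x y k) (jordan2 x y 1).
Proof.
by move=> k0; scaled_similar_by (mx3 1 0 0 0 1 0 0 0 k^-1) (1 : R).
Qed.

Lemma listed_jordan2 (x y k : R) : listed_or_not_LCS (jordan2 x y k).
Proof.
have [->|k0] := eqVneq k 0; first exact: listed_diag3.
have [x0|x0] := eqVneq x 0.
  have [y0|y0] := eqVneq y 0.
    apply: (listed_or_not_LCS_sim (scaled_similar_jordan2_1 _ _ k0)); rewrite x0 y0.
    left; left; apply: aa_br_iso_mkad.
    by scaled_similar_by (mx3 0 0 1 0 1 0 1 0 0) (1 : R).
  apply: (@listed_or_not_LCS_sim _ _ (jordan2 0 1 (k / y))).
    by scaled_similar_by (mx3 1 0 0 0 1 0 0 0 1) y; rewrite ?x0.
  have ky : k / y != 0 by rewrite mulf_neq0 ?invr_eq0.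
  apply: (listed_or_not_LCS_sim (scaled_similar_jordan2_1 _ _ ky)).
  left; do 4 right; left; apply: aa_br_iso_mkad.
  by scaled_similar_by (mx3 0 1 0 0 0 1 1 0 0) (1 : R).
apply: (@listed_or_not_LCS_sim _ _ (jordan2 1 (y / x) (k / x))).
  by scaled_similar_by (mx3 1 0 0 0 1 0 0 0 1) x.
have kx : k / x != 0 by rewrite mulf_neq0 ?invr_eq0.
apply: (listed_or_not_LCS_sim (scaled_similar_jordan2_1 _ _ kx)).
left; do 5 right; left; exists (y / x).
exact/aa_br_iso_mkad/scaled_similar_refl.
Qed.

Lemma listed_jordan3 (x : R) : listed_or_not_LCS (jordan3 x).
Proof.
left; have [->|x0] := eqVneq x 0.
  right; left; apply: aa_br_iso_mkad.
  by scaled_similar_by (mx3 0 0 1 0 1 0 1 0 0) (1 : R).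
do 6 right; left; apply: aa_br_iso_mkad.
by scaled_similar_by (mx3 (x^-2) 0 0 0 x^-1 0 0 0 1) x.
Qed.

Lemma listed_rot3 (r p q : R) : q != 0 -> listed_or_not_LCS (rot3 r p q).
Proof.
move=> q0; apply: (@listed_or_not_LCS_sim _ _ (rot3 (r / q) (p / q) 1)).
  by scaled_similar_by (mx3 1 0 0 0 1 0 0 0 1) q.
have [r0|r0] := eqVneq (r / q) 0.
  left; do 7 right; left; exists (p / q); apply: aa_br_iso_mkad; rewrite r0.
  by scaled_similar_by (mx3 0 1 0 0 0 1 1 0 0) (1 : R).
have [p0|p0] := eqVneq (p / q) 0; first by right; rewrite p0; exact: no_LCS_rot3.
left; do 8 right; exists (r / q), (p / q); split=> //.
exact/aa_br_iso_mkad/scaled_similar_refl.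
Qed.

End NormalFormsListed.

Section LowerTriangular.
Variable R : realType.
Local Notation mx3 := (@mx3 R).

Lemma listed_lower3_scalar (r a b d : R) : listed_or_not_LCS (lower3 r r r a b d).
Proof.
have [->|a0] := eqVneq a 0; last first.
  have [d0|d0] := eqVneq d 0.
    apply: (@listed_or_not_LCS_sim _ _ (jordan2 r r a)); last exact: listed_jordan2.
    by scaled_similar_by (mx3 0 (- (b / a)) 1 1 0 0 0 1 0) (1 : R); rewrite ?d0.
  apply: (@listed_or_not_LCS_sim _ _ (jordan3 r)); last exact: listed_jordan3.
  by scaled_similar_by (mx3 (d * a) 0 0 b d 0 0 0 1) (1 : R).
have [d0|d0] := eqVneq d 0.
  have [b0|b0] := eqVneq b 0; first by rewrite d0 b0; exact: listed_diag3.
  apply: (@listed_or_not_LCS_sim _ _ (jordan2 r r 1)); last exact: listed_jordan2.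
  by scaled_similar_by (mx3 0 1 0 b 0 0 0 0 1) (1 : R); rewrite ?d0.
apply: (@listed_or_not_LCS_sim _ _ (jordan2 r r 1)); last exact: listed_jordan2.
by scaled_similar_by (mx3 1 0 0 b d 0 0 0 1) (1 : R).
Qed.

Lemma listed_lower3 (r s t a b d : R) : listed_or_not_LCS (lower3 r s t a b d).
Proof.
have [<-|rs] := eqVneq r s.
  have [->|tr] := eqVneq t r; first exact: listed_lower3_scalar.
  have tr' : t - r != 0 by rewrite subr_eq0.
  apply: (@listed_or_not_LCS_sim _ _ (jordan2 t r a)); last exact: listed_jordan2.
  by scaled_similar_by
    (mx3 ((b + d / (t - r) * a) / (t - r)) (d / (t - r)) 1 1 0 0 0 1 0) (1 : R).
have sr : s - r != 0 by rewrite subr_eq0 eq_sym.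
have [->|ts] := eqVneq t s.
  apply: (@listed_or_not_LCS_sim _ _ (jordan2 r s d)); last exact: listed_jordan2.
  by scaled_similar_by
    (mx3 1 0 0 (a / (s - r)) 1 0 ((b - d * (a / (s - r))) / (s - r)) 0 1) (1 : R).
have [->|tr] := eqVneq t r.
  have rs' : r - s != 0 by rewrite subr_eq0.
  apply: (@listed_or_not_LCS_sim _ _ (jordan2 s r (b + d / (r - s) * a))).
    by scaled_similar_by (mx3 (a / (s - r)) 1 0 1 0 0 0 (d / (r - s)) 1) (1 : R).
  exact: listed_jordan2.
have ts' : t - s != 0 by rewrite subr_eq0.
have tr' : t - r != 0 by rewrite subr_eq0.
apply: (@listed_or_not_LCS_sim _ _ (diag3 r s t)); last exact: listed_diag3.
by scaled_similar_by
  (mx3 1 0 0 (a / (s - r)) 1 0 ((b + d / (t - s) * a) / (t - r)) (d / (t - s)) 1) (1 : R).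
Qed.

End LowerTriangular.

Section Classification.
Variable R : realType.
Local Notation mx3 := (@mx3 R).

(* An odd-degree characteristic polynomial has a real root, whose left eigenvector
   is taken as the first vector of the new basis. *)
Lemma similar_first_row_eigen (B : 'M[R]_3) :
  exists B', scaled_similar B B' /\ B' i0 i1 = 0 /\ B' i0 i2 = 0.
Proof.
have [r r_root] : {r | root (char_poly B) r}.
  by apply: polyrcf.odd_poly_root; rewrite size_char_poly.
have /eigenvalueP [v vB v0] : eigenvalue B r by rewrite eigenvalue_root_char.
pose E := row_ebase v; pose C := col_ebase v.
pose y := C *m pid_mx 1 : 'rV[R]_3.
have yE : y *m E = v by have := mulmx_ebase v; rewrite rank_rV v0.
have y_j (j : 'I_3) : j != ord0 -> y 0 j = 0.
  move=> j0; rewrite /y mxE big_ord1.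
  have -> : (pid_mx 1 : 'M[R]_(1, 3)) 0 j = 0 by rewrite mxE; case: j j0 => [[|[|[|//]]] ?].
  by rewrite mulr0.
have y0 : y 0 ord0 != 0.
  apply: contra v0 => /eqP y00; apply/eqP; rewrite -yE.
  have -> : y = 0.
    apply/rowP => j; rewrite [RHS]mxE; have [->|j0] := eqVneq j ord0; first exact: y00.
    exact: y_j.
  by rewrite mul0mx.
pose B' := E *m B *m invmx E.
exists B'; split.
  exists E, 1; split; [exact: row_ebase_unit | exact: oner_neq0 |].
  by rewrite scale1r /B' mulmxKV // row_ebase_unit.
have yB : y *m B' = r *: y.
  by rewrite /B' !mulmxA yE vB -scalemxAl -yE mulmxK // row_ebase_unit.
clearbody y B'.
have B'0 (j : 'I_3) : j != ord0 -> B' ord0 j = 0.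
  move=> j0; have := congr1 (fun X : 'rV[R]_3 => X 0 j) yB.
  rewrite mxE big_ord_recl big1 ?addr0; last first.
    by move=> k _; rewrite y_j ?mul0r // eq_sym neq_lift.
  rewrite mxE (y_j j j0) mulr0 => /eqP.
  by rewrite mulf_eq0 (negbTE y0) /= => /eqP.
by split; apply: B'0.
Qed.

Lemma similar_lower3_real_root (r a1 a2 c11 c12 c21 c22 s : R) : c12 != 0 ->
  s ^+ 2 - (c11 + c22) * s + c11 * c22 - c12 * c21 = 0 ->
  scaled_similar (mx3 r 0 0 a1 c11 c12 a2 c21 c22)
    (lower3 r s (c11 + c22 - s) ((s - c22) * a1 + c12 * a2) a1 1).
Proof.
by move=> c12_0 s_root; scaled_similar_by (mx3 1 0 0 0 (s - c22) c12 0 1 0) (1 : R).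
Qed.

(* The first column of the conjugating matrix solves a 2x2 linear system of
   determinant [(r - p)^2 + q^2]. *)
Lemma similar_rot3 (r a1 a2 p h c12 q : R) : c12 != 0 -> q != 0 ->
  scaled_similar (mx3 r 0 0 a1 (p + h) c12 a2 (- (q ^+ 2 + h ^+ 2) / c12) (p - h))
    (rot3 r p (- q)).
Proof.
move=> c12_0 q0; have D0 : (r - p) ^+ 2 + q ^+ 2 != 0.
  by rewrite lt0r_neq0 // ltr_wpDl ?sqr_ge0 // lt0r sqrf_eq0 q0 sqr_ge0.
by scaled_similar_by (mx3 1 0 0 (- ((r - p + h) * a1 + c12 * a2) / ((r - p) ^+ 2 + q ^+ 2)) 1 0
  ((q ^+ 2 * a1 - (r - p) * (h * a1 + c12 * a2)) / (q * ((r - p) ^+ 2 + q ^+ 2)))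
  (h / q) (c12 / q)) (1 : R).
Qed.

(* [disc] is the discriminant of the characteristic polynomial of the lower 2x2 block:
   a real eigenvalue [s] makes the matrix lower triangular, otherwise the block has
   eigenvalues [p +- i q] and is conjugate to a rotation-scaling. *)
Lemma listed_block_lower3 (r a1 a2 c11 c12 c21 c22 : R) :
  listed_or_not_LCS (mx3 r 0 0 a1 c11 c12 a2 c21 c22).
Proof.
have [->|c12_0] := eqVneq c12 0; first exact: listed_lower3.
pose disc := (c11 - c22) ^+ 2 + 4 * c12 * c21.
have [disc_ge0|disc_lt0] := lerP 0 disc.
  pose s := (c11 + c22 + Num.sqrt disc) / 2.
  have s_root : s ^+ 2 - (c11 + c22) * s + c11 * c22 - c12 * c21 = 0.
    have := sqr_sqrtr disc_ge0; rewrite /s /disc; set q := Num.sqrt _ => q2.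
    have -> : ((c11 + c22 + q) / 2) ^+ 2 - (c11 + c22) * ((c11 + c22 + q) / 2) +
      c11 * c22 - c12 * c21 = (q ^+ 2 - ((c11 - c22) ^+ 2 + 4 * c12 * c21)) / 4 by field.
    by rewrite q2 subrr mul0r.
  apply: (listed_or_not_LCS_sim (similar_lower3_real_root r a1 a2 c12_0 s_root)).
  exact: listed_lower3.
pose q := Num.sqrt (- disc) / 2; pose p := (c11 + c22) / 2; pose h := (c11 - c22) / 2.
have q0 : q != 0.
  by rewrite mulf_neq0 ?invr_eq0 ?pnatr_eq0 // lt0r_neq0 // sqrtr_gt0 oppr_gt0.
have q2 : q ^+ 2 = - disc / 4.
  by rewrite /q expr_div_n sqr_sqrtr ?oppr_ge0 ?ltW //; field.
have -> : mx3 r 0 0 a1 c11 c12 a2 c21 c22 =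
    mx3 r 0 0 a1 (p + h) c12 a2 (- (q ^+ 2 + h ^+ 2) / c12) (p - h).
  by apply: eq_mx3; rewrite /p /h // ?q2 /disc; field.
apply: (listed_or_not_LCS_sim (similar_rot3 r a1 a2 p h c12_0 q0)).
by apply: listed_rot3; rewrite oppr_eq0.
Qed.

Lemma listed_or_not_LCS_all (B : 'M[R]_3) : listed_or_not_LCS B.
Proof.
have [B' [BB' [B'01 B'02]]] := similar_first_row_eigen B.
apply: (listed_or_not_LCS_sim BB'); rewrite (mx3E B') B'01 B'02.
exact: listed_block_lower3.
Qed.

End Classification.

Unset Implicit Arguments.

Theorem theorem4p5 (R : realType) (br : 'rV[R]_4 -> 'rV[R]_4 -> 'rV[R]_4) :
  is_lie_bracket br -> almost_abelian br -> has_LCS br -> in_list br.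
Proof.
move=> Lbr AAbr LCS; have [B iso] := almost_abelian_aa_br Lbr AAbr.
have [listed|noLCS] := listed_or_not_LCS_all B; first exact: in_list_iso iso listed.
by case: noLCS; exact: has_LCS_iso iso LCS.
Qed.
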